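(* Let $f\in A[X]$ be monic with discriminant $\Delta=\mathrm{Res}_X(f,f')\neq 0$, $r=v(\Delta)$, and let $N>2r$ be an integer. Then the number of roots in $A/\pi^NA$ of the reduction $f_N$ of $f$ modulo $\pi^N$ is at most $q^r$ times the number of roots of $f$ in $K$.
   Context: $K$ is a field complete with respect to a non-archimedean discrete valuation $v$, normalized by $v(\pi)=1$ for a uniformizer $\pi$ of the valuation ring $A=\{x\in K: v(x)\geq 0\}$; the residue field $A/\pi A$ is finite with $q$ elements. *)

From HB Require Import structures.
From mathcomp Require Import all_boot all_order all_algebra.
Set Implicit Arguments. Unset Strict Implicit. Unset Printing Implicit Defensive.
Import Order.TTheory GRing.Theory Num.Theory.
Local Open Scope ring_scope.

(* The valuation v : K -> int is meaningful only on nonzero elements;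
   v(0) = +oo is encoded by the predicate [vge] below. *)

Definition vge (K : fieldType) (v : K -> int) (n : int) (x : K) : bool :=
  (x == 0) || (n <= v x).

Definition inA (K : fieldType) (v : K -> int) (x : K) : bool := vge v 0 x.

Definition congr_mod (K : fieldType) (v : K -> int) (n : nat) (x y : K) : bool :=
  vge v n%:Z (x - y).

Definition normalized_discrete_valuation (K : fieldType) (v : K -> int) (pi : K)
  : Prop :=
  [/\ forall x y : K, x != 0 -> y != 0 -> v (x * y) = v x + v y,
      forall x y : K, x != 0 -> y != 0 -> x + y != 0 ->
        Order.min (v x) (v y) <= v (x + y),
      pi != 0 & v pi = 1].

Definition vcauchy (K : fieldType) (v : K -> int) (u : nat -> K) : Prop :=
  forall M : int, exists n0 : nat, forall m n : nat,
    (n0 <= m)%N -> (n0 <= n)%N -> vge v M (u m - u n).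

Definition vconverges (K : fieldType) (v : K -> int) (u : nat -> K) (l : K) : Prop :=
  forall M : int, exists n0 : nat, forall n : nat, (n0 <= n)%N -> vge v M (u n - l).

Definition vcomplete (K : fieldType) (v : K -> int) : Prop :=
  forall u : nat -> K, vcauchy v u -> exists l : K, vconverges v u l.

(* the residue field A / pi A has exactly q elements: there is a complete
   system of q pairwise incongruent representatives in A *)
Definition residue_card (K : fieldType) (v : K -> int) (q : nat) : Prop :=
  exists s : seq K,
    [/\ size s = q,
        all (inA v) s,
        forall i j : nat, (i < size s)%N -> (j < size s)%N ->
          congr_mod v 1 (nth 0 s i) (nth 0 s j) -> i = j
      & forall a : K, inA v a -> exists2 b, b \in s & congr_mod v 1 a b].

Definition polyA (K : fieldType) (v : K -> int) (f : {poly K}) : Prop :=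
  forall i : nat, inA v f`_i.

From HB Require Import structures.
From mathcomp Require Import all_boot all_order all_algebra zify ring.
Import Order.TTheory GRing.Theory Num.Theory.
Local Open Scope ring_scope.
Set Implicit Arguments. Unset Strict Implicit. Unset Printing Implicit Defensive.

(* Bezout over the valuation ring: Delta = u f + w f' with u, w in A[X], so at any
   x in A with v(f(x)) > v(Delta) = r we get v(f'(x)) <= r.  When moreover
   v(f(x)) >= N > 2r, Hensel's lemma gives a root a of f with v(a - x) >= N - r.
   The approximate roots in L are therefore spread over the roots of f, and
   those attached to a fixed root a are pairwise incongruent mod pi^N but
   congruent to a mod pi^(N-r); x |-> (x - a) / pi^(N-r) sends them to elements
   of A pairwise incongruent mod pi^r, of which there are at most q^r. *)

(* [map_resultant] in mxpoly is stated for morphisms out of [{poly aR}]. *)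
Lemma rmorph_resultant (aR rR : nzRingType) (f : {rmorphism aR -> rR})
    (p q : {poly aR}) :
    f (lead_coef p) != 0 -> f (lead_coef q) != 0 ->
  f (resultant p q) = resultant (map_poly f p) (map_poly f q).
Proof.
move=> nz_fp nz_fq; rewrite /resultant /Sylvester_mx !size_map_poly_id0 //.
rewrite -det_map_mx /= map_col_mx; congr (\det (col_mx _ _));
  by apply: map_lin1_mx => u; rewrite map_poly_rV rmorphM /= map_rVpoly.
Qed.

Lemma resultant_polyC (R : comNzRingType) (p : {poly R}) (c : R) :
  resultant p c%:P = c ^+ (size p).-1.
Proof.
have d0 : (size c%:P).-1 = 0%N by rewrite size_polyC; case: (c != 0).
rewrite /resultant; suff -> : Sylvester_mx p c%:P = c%:M by rewrite det_scalar d0.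
apply/matrixP => i j; rewrite Sylvester_mxE !mxE.
case: splitP => k ik; first by have := ltn_ord k; rewrite {2}d0.
rewrite coefC -val_eqE /= ik [in (_ + k)%N]d0 add0n subn_eq0.
by case: ltngtP; rewrite ?mulr0n ?mulr1n.
Qed.

Lemma size_le_mul_count (T U : eqType) (R : T -> U -> bool) (X : seq T)
    (B : seq U) (c : nat) :
    all (fun x => has (R x) B) X ->
    (forall b, b \in B -> count (R^~ b) X <= c)%N ->
  (size X <= size B * c)%N.
Proof.
move=> /allP cover le_c; apply: (@leq_trans (\sum_(b <- B) count (R^~ b) X)).
  under [leqRHS]eq_bigr => b _ do rewrite -sum1_count big_mkcond.
  rewrite -sum1_size exchange_big big_seq [leqRHS]big_seq; apply: leq_sum => x xX.
  by rewrite -big_mkcond sum1_count -has_count cover.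
rewrite -sum1_size big_distrl big_seq [leqRHS]big_seq.
by apply: leq_sum => b /le_c; rewrite /= mul1n.
Qed.

Section Valuation.
Variables (K : fieldType) (v : K -> int) (pi : K).
Hypothesis Hv : normalized_discrete_valuation v pi.

Lemma pi_neq0 : pi != 0. Proof. by case: Hv. Qed.

Lemma vM x y : x != 0 -> y != 0 -> v (x * y) = v x + v y.
Proof. by case: Hv => vM *; apply: vM. Qed.

Lemma v1 : v 1 = 0.
Proof.
have := vM (oner_neq0 K) (oner_neq0 K); rewrite mulr1 => /esym/eqP.
by rewrite -subr_eq0 addrK => /eqP.
Qed.

Lemma vX x n : x != 0 -> v (x ^+ n) = n%:Z * v x.
Proof.
move=> x0; elim: n => [|n IH]; first by rewrite expr0 v1 mul0r.
by rewrite exprS vM ?expf_neq0 // IH intS mulrDl mul1r.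
Qed.

Lemma vpiX k : v (pi ^+ k) = k%:Z.
Proof. by case: Hv => _ _ pi0 vpi; rewrite vX // vpi mulr1. Qed.

Lemma vV x : x != 0 -> v x^-1 = - v x.
Proof.
move=> x0; have := vM x0 (invr_neq0 x0); rewrite mulfV // v1 => /eqP.
by rewrite eq_sym addrC addr_eq0 => /eqP.
Qed.

Lemma vN x : v (- x) = v x.
Proof.
have [->|x0] := eqVneq x 0; first by rewrite oppr0.
have N1 : (-1 : K) != 0 by rewrite oppr_eq0 oner_neq0.
have vN1 : v (-1) = 0 by have := vM N1 N1; rewrite mulrNN mulr1 v1; lia.
by rewrite -mulN1r vM // vN1 add0r.
Qed.

Lemma vgeE n x : x != 0 -> vge v n x = (n <= v x).
Proof. by rewrite /vge => /negPf ->. Qed.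

Lemma inA_v_ge0 x : inA v x -> x != 0 -> 0 <= v x.
Proof. by move=> xA x0; rewrite -(vgeE _ x0). Qed.

Lemma vge0 n : vge v n 0. Proof. by rewrite /vge eqxx. Qed.

Lemma vge_le m n x : m <= n -> vge v n x -> vge v m x.
Proof. by rewrite /vge => le_mn /orP[->//|/(le_trans le_mn)->]; rewrite orbT. Qed.

Lemma vge_gtv n x : x != 0 -> v x < n -> ~~ vge v n x.
Proof. by move=> x0; rewrite vgeE // -ltNge. Qed.

Lemma vgeN n x : vge v n (- x) = vge v n x.
Proof. by rewrite /vge oppr_eq0 vN. Qed.

Lemma vgeD n x y : vge v n x -> vge v n y -> vge v n (x + y).
Proof.
have [->|x0] := eqVneq x 0; first by rewrite add0r.
have [->|y0] := eqVneq y 0; first by rewrite addr0.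
have [->|xy0] := eqVneq (x + y) 0; first by rewrite vge0.
rewrite !vgeE // => nx ny; case: Hv => _ vD _ _.
by apply: le_trans (vD _ _ x0 y0 xy0); rewrite le_min nx ny.
Qed.

Lemma vgeB n x y : vge v n x -> vge v n y -> vge v n (x - y).
Proof. by move=> nx ny; apply: vgeD; rewrite ?vgeN. Qed.

Lemma vgeM m n x y : vge v m x -> vge v n y -> vge v (m + n) (x * y).
Proof.
have [->|x0] := eqVneq x 0; first by rewrite mul0r => _ _; apply: vge0.
have [->|y0] := eqVneq y 0; first by rewrite mulr0 => _ _; apply: vge0.
by rewrite !vgeE ?mulf_neq0 // vM // => mx ny; apply: lerD.
Qed.

Lemma vgeV x : x != 0 -> vge v (- v x) x^-1.
Proof. by move=> x0; rewrite vgeE ?invr_eq0 // vV. Qed.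

Lemma vge_divpiX n k x : vge v n (x / pi ^+ k) = vge v (n + k%:Z) x.
Proof.
have pik0 : pi ^+ k != 0 by rewrite expf_neq0 // pi_neq0.
have [->|x0] := eqVneq x 0; first by rewrite mul0r !vge0.
rewrite !vgeE ?mulf_neq0 ?invr_eq0 // vM ?invr_eq0 // vV // vpiX.
by rewrite lerBrDr.
Qed.

Lemma congr_modC n x y : congr_mod v n x y = congr_mod v n y x.
Proof. by rewrite /congr_mod -vgeN opprB. Qed.

Fact inA_subring_closed : subring_closed (inA v).
Proof.
split=> [|x y|x y]; rewrite !unfold_in /inA; first by rewrite vgeE ?oner_neq0 // v1.
  exact: vgeB.
by rewrite -[0]addr0; apply: vgeM.
Qed.

HB.instance Definition _ :=
  GRing.isSubringClosed.Build K (inA v) inA_subring_closed.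

Lemma polyA_polyOver f : polyA v f -> f \is a polyOver (inA v).
Proof. by move=> fA; apply/polyOverP. Qed.

Lemma polyOverA_MXaddC p c :
  p * 'X + c%:P \is a polyOver (inA v) -> p \is a polyOver (inA v) /\ inA v c.
Proof.
move=> /polyOverP pcA; split.
  by apply/polyOverP => i; have := pcA i.+1; rewrite coefD coefMX coefC addr0.
by have := pcA 0%N; rewrite coefD coefMX coefC add0r.
Qed.

Lemma horner_diff_vge p x h n : p \is a polyOver (inA v) ->
  inA v x -> inA v h -> vge v n h -> vge v n (p.[x + h] - p.[x]).
Proof.
elim/poly_ind: p => [|p c IH]; first by rewrite !horner0 subrr => *; apply: vge0.
move=> /polyOverA_MXaddC[pA cA] xA hA nh.
have -> : (p * 'X + c%:P).[x + h] - (p * 'X + c%:P).[x] =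
    (p.[x + h] - p.[x]) * (x + h) + p.[x] * h by rewrite !hornerMXaddC; ring.
apply: vgeD.
  by rewrite -[n]addr0; apply: vgeM; [exact: IH | exact: (rpredD xA hA)].
by rewrite -[n]add0r; apply: vgeM => //; exact: (rpred_horner pA xA).
Qed.

Lemma horner_taylor_vge p x h n : p \is a polyOver (inA v) ->
  inA v x -> inA v h -> vge v n h ->
  vge v (n + n) (p.[x + h] - p.[x] - p^`().[x] * h).
Proof.
elim/poly_ind: p => [|p c IH].
  by rewrite deriv0 !horner0 mul0r !subrr => *; apply: vge0.
move=> /polyOverA_MXaddC[pA cA] xA hA nh.
have -> : (p * 'X + c%:P).[x + h] - (p * 'X + c%:P).[x]
      - (p * 'X + c%:P)^`().[x] * h =
    (p.[x + h] - p.[x] - p^`().[x] * h) * (x + h) + p^`().[x] * (h * h).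
  by rewrite derivMXaddC hornerD hornerMX !hornerMXaddC; ring.
apply: vgeD.
  by rewrite -[n + n]addr0; apply: vgeM; [exact: IH | exact: (rpredD xA hA)].
rewrite -[n + n]add0r; apply: vgeM; last exact: vgeM.
have dA : p^`() \is a polyOver (inA v) by apply: polyOver_deriv.
exact: (rpred_horner dA xA).
Qed.

Lemma size_monic_gt1 f x n :
  f \is monic -> 0 < n -> vge v n f.[x] -> (1 < size f)%N.
Proof.
move=> /monicP f_monic n_gt0; rewrite ltnNge; apply: contraL => sf.
have -> : f = 1.
  rewrite [LHS](size1_polyC sf) -polyC1 -f_monic lead_coefE.
  by case: (size f) sf => [|[]].
by rewrite hornerC vgeE ?oner_neq0 // v1 -ltNge.
Qed.

(* The valuation ring as a type, so that [resultant_in_ideal] yields a Bezout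
   identity with coefficients in A. *)
Record vring := VRing { vring_val :> K; vring_valP : inA v vring_val }.
HB.instance Definition _ := [isSub for vring_val].
HB.instance Definition _ := [Choice of vring by <:].
HB.instance Definition _ := [SubChoice_isSubComNzRing of vring by <:].

Lemma polyOverA_lift f :
  f \is a polyOver (inA v) -> {fA : {poly vring} | map_poly val fA = f}.
Proof.
move=> /polyOverP fA; exists (\poly_(i < size f) VRing (fA i)).
apply/polyP=> i; rewrite coef_map coef_poly /=; case: ltnP => // le_f_i.
by rewrite nth_default.
Qed.

Lemma resultant_in_idealA f g :
    f \is a polyOver (inA v) -> g \is a polyOver (inA v) ->
    (1 < size f)%N -> (1 < size g)%N ->
  exists u w, [/\ u \is a polyOver (inA v), w \is a polyOver (inA v)
                & (resultant f g)%:P = u * f + w * g].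
Proof.
move=> /polyOverA_lift[fA fE] /polyOverA_lift[gA gE] sf sg.
have lift_size (p : {poly vring}) : size (map_poly val p) = size p.
  by apply: size_map_inj_poly => //; exact: val_inj.
have lift_lead_neq0 (p : {poly vring}) : (1 < size p)%N -> val (lead_coef p) != 0.
  move=> sp; rewrite -lead_coef_map_inj //; last exact: val_inj.
  by rewrite lead_coef_eq0 -size_poly_gt0 lift_size ltnW.
rewrite -fE -gE !lift_size in sf sg *.
have [[u w] /= _ ideal] := resultant_in_ideal sf sg.
exists (map_poly val u), (map_poly val w); split.
- by apply/polyOverP => i; rewrite coef_map; apply: valP.
- by apply/polyOverP => i; rewrite coef_map; apply: valP.
have lift_res : val (resultant fA gA) = resultant (map_poly val fA) (map_poly val gA).
  by apply: rmorph_resultant; apply: lift_lead_neq0.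
have := congr1 (map_poly val) ideal.
by rewrite map_polyC rmorphD !rmorphM /= lift_res.
Qed.

Lemma resultant_horner_ideal f g x :
    f \is a polyOver (inA v) -> g \is a polyOver (inA v) ->
    (1 < size f)%N -> inA v x ->
  exists u w, [/\ inA v u, inA v w & resultant f g = u * f.[x] + w * g.[x]].
Proof.
move=> fA gA sf xA; have [sg|sg] := leqP (size g) 1.
  have /polyOverP/(_ 0%N) cA := gA; move: (g`_0) cA (size1_polyC sg) => c cA ->.
  exists 0, (c ^+ (size f).-2); split; first exact: vge0.
    exact: (rpredX _ cA).
  by rewrite hornerC mul0r add0r resultant_polyC -exprSr prednK //; lia.
have [u [w [uA wA ideal]]] := resultant_in_idealA fA gA sf sg.
exists u.[x], w.[x]; split; first exact: (rpred_horner uA xA).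
  exact: (rpred_horner wA xA).
by have := congr1 (horner^~ x) ideal; rewrite hornerC hornerD !hornerM.
Qed.

Lemma resultant_inA f g :
    f \is a polyOver (inA v) -> g \is a polyOver (inA v) -> (1 < size f)%N ->
  inA v (resultant f g).
Proof.
move=> fA gA sf; have zA : inA v 0 := vge0 0.
have [u [w [uA wA ->]]] := resultant_horner_ideal fA gA sf zA.
have [fzA gzA] := (rpred_horner fA zA, rpred_horner gA zA).
by apply: vgeD; rewrite -[0]addr0; apply: vgeM.
Qed.

Lemma vderiv_le_vresultant f x :
    f \is a polyOver (inA v) -> (1 < size f)%N -> resultant f f^`() != 0 ->
    inA v x -> vge v (v (resultant f f^`()) + 1) f.[x] ->
  f^`().[x] != 0 /\ v f^`().[x] <= v (resultant f f^`()).
Proof.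
move=> fA sf D0 xA fx.
have f'A : f^`() \is a polyOver (inA v) by apply: polyOver_deriv.
have [u [w [uA wA DE]]] := resultant_horner_ideal fA f'A sf xA.
set D := resultant f f^`() in D0 fx DE *.
suff : ~~ vge v (v D + 1) f^`().[x].
  by rewrite /vge negb_or => /andP[-> ]; rewrite -ltNge ltzD1.
have lt_D : v D < v D + 1 by rewrite ltzD1.
apply: contra (vge_gtv D0 lt_D) => f'x.
rewrite -[v D + 1]add0r {2}DE.
by apply: vgeD; apply: vgeM.
Qed.

Lemma vge_telescope (u : nat -> K) (c : int) :
    (forall k, vge v (c + k%:Z) (u k.+1 - u k)) ->
  forall n m, (n <= m)%N -> vge v (c + n%:Z) (u m - u n).
Proof.
move=> step n m /subnKC <-; elim: (m - n)%N => [|k IH].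
  by rewrite addn0 subrr vge0.
rewrite addnS -[u _ - u n](subrKA (u (n + k)%N)); apply: vgeD => //.
by apply: vge_le (step _); rewrite lerD2l lez_nat leq_addr.
Qed.

Lemma vcauchy_steps (u : nat -> K) (c : int) :
  (forall k, vge v (c + k%:Z) (u k.+1 - u k)) -> vcauchy v u.
Proof.
move=> step M; set n0 := `|M - c|%N; exists n0 => m n le_m le_n.
have M_le : M <= c + n0%:Z by rewrite /n0 -lerBlDl; apply: lez_abs.
have -> : u m - u n = (u m - u n0) - (u n - u n0) by ring.
by apply: vgeB; apply: vge_le M_le _; apply: vge_telescope.
Qed.

Lemma vconverges0 (u : nat -> K) (c : int) :
  (forall k, vge v (c + k%:Z) (u k)) -> vconverges v u 0.
Proof.
move=> uk M; exists `|M - c|%N => n le_n; rewrite subr0.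
apply: vge_le (uk n); rewrite -lerBlDl (le_trans (lez_abs _)) // lez_nat.
Qed.

Lemma vge_vlimit (u : nat -> K) a x M :
  vconverges v u a -> (forall k, vge v M (u k - x)) -> vge v M (a - x).
Proof.
move=> ua ux; have [n0 /(_ n0 (leqnn n0)) n0a] := ua M.
by rewrite -(subrKA (u n0)); apply: vgeD; rewrite // -vgeN opprB.
Qed.

Lemma root_vlimit f (u : nat -> K) a :
    f \is a polyOver (inA v) -> (forall k, inA v (u k)) ->
    vconverges v u a -> vconverges v (fun k => f.[u k]) 0 ->
  root f a.
Proof.
move=> fA uA ua fu; apply: contraT => fa0.
pose M := `|v f.[a]|%:Z + 1.
have [n0 le_ua] := ua M; have [n1 le_fu] := fu M; set n := maxn n0 n1.
have yaM : vge v M (a - u n) by rewrite -vgeN opprB le_ua ?leq_maxl.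
have ya0 : inA v (a - u n) by apply: vge_le yaM.
have := horner_diff_vge fA (uA n) ya0 yaM; rewrite [u n + _]addrC subrK => diffM.
have lt_M : v f.[a] < M by rewrite /M ltzD1 lez_abs.
case/negP: (vge_gtv fa0 lt_M).
rewrite -(subrK f.[u n] f.[a]); apply: vgeD => //.
by rewrite -[f.[u n]]subr0 le_fu ?leq_maxr.
Qed.

Lemma newton_step f x y (N M : int) :
    f \is a polyOver (inA v) -> inA v x -> inA v y -> f^`().[x] != 0 ->
    2 * v f^`().[x] < N -> vge v (N - v f^`().[x]) (y - x) ->
    N <= M -> vge v M f.[y] ->
  vge v (M - v f^`().[x]) (f.[y] / f^`().[x]) /\
  vge v (M + 1) f.[y - f.[y] / f^`().[x]].
Proof.
move=> fA xA yA d0 eN yx NM fy.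
set d := f^`().[x] in d0 eN yx *; set e := v d in eN yx *.
have f'A : f^`() \is a polyOver (inA v) by apply: polyOver_deriv.
have e_ge0 : 0 <= e by apply: inA_v_ge0 (rpred_horner f'A xA) d0.
have [Ne_ge0 Me_ge0 M1_le M1_le'] : [/\ 0 <= N - e, 0 <= M - e,
    M + 1 <= N - e + (M - e) & M + 1 <= M - e + (M - e)].
  by clear -e_ge0 eN NM; split; lia.
set h := f.[y] / d; have hM : vge v (M - e) h by apply: vgeM => //; exact: vgeV.
split=> //; have hA : inA v (- h) by rewrite /inA vgeN; apply: vge_le hM.
have yxA : inA v (y - x) by apply: vge_le yx.
have taylor := horner_taylor_vge fA yA hA (n := M - e); rewrite vgeN in taylor.
have diff := horner_diff_vge f'A xA yxA yx; rewrite [x + _]addrC subrK in diff.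
have -> : f.[y - h] = (f.[y - h] - f.[y] - f^`().[y] * - h) + (f^`().[y] - d) * - h.
  have dh : d * h = f.[y] by rewrite /h mulrC divfK.
  by rewrite mulrBl !mulrN opprK dh; ring.
apply: vgeD; first exact: vge_le M1_le' (taylor hM).
by apply: vge_le M1_le (vgeM diff _); rewrite vgeN.
Qed.

(* Newton iteration with the derivative frozen at the starting point: linear
   convergence is all that is needed. *)
Fixpoint newton (f : {poly K}) (d x : K) (k : nat) : K :=
  if k is k'.+1 then newton f d x k' - f.[newton f d x k'] / d else x.

Lemma newton_invariant f x (N : int) k :
    f \is a polyOver (inA v) -> inA v x -> f^`().[x] != 0 ->
    2 * v f^`().[x] < N -> vge v N f.[x] ->
  let y := newton f f^`().[x] x k in
  [/\ inA v y, vge v (N - v f^`().[x]) (y - x) & vge v (N + k%:Z) f.[y]].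
Proof.
move=> fA xA d0 eN fx; elim: k => [|k [yA yx fy]] /=.
  by rewrite subrr addr0; split=> //; apply: vge0.
set y := newton _ _ _ k in yA yx fy *.
have e_ge0 : 0 <= v f^`().[x].
  by apply: inA_v_ge0 d0; apply: rpred_horner xA; apply: polyOver_deriv.
have [hM fy'] := newton_step fA xA yA d0 eN yx (lerDl N k) fy.
have [Nke_ge0 Nke_ge] : 0 <= N + k%:Z - v f^`().[x] /\
    N - v f^`().[x] <= N + k%:Z - v f^`().[x] by clear -e_ge0 eN; split; lia.
have hA : inA v (f.[y] / f^`().[x]) by apply: vge_le hM.
split; first exact: rpredB.
- by rewrite addrAC; apply: vgeB => //; apply: vge_le hM.
by rewrite -addn1 PoszD addrA.
Qed.

Lemma hensel f x (N : int) :
    vcomplete v -> f \is a polyOver (inA v) -> inA v x -> f^`().[x] != 0 ->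
    2 * v f^`().[x] < N -> vge v N f.[x] ->
  exists2 a, root f a & vge v (N - v f^`().[x]) (a - x).
Proof.
move=> complete fA xA d0 eN fx; pose y := newton f f^`().[x] x.
have inv k := newton_invariant k fA xA d0 eN fx.
have step k : vge v (N - v f^`().[x] + k%:Z) (y k.+1 - y k).
  have [yA yx fy] := inv k.
  have [hM _] := newton_step fA xA yA d0 eN yx (lerDl N k) fy.
  by rewrite /y /= [X in vge _ _ X]addrAC subrr add0r vgeN addrAC.
have [a ya] := complete y (vcauchy_steps step).
exists a; last by apply: vge_vlimit ya _ => k; have [] := inv k.
apply: root_vlimit fA _ ya _ => [k|]; first by have [] := inv k.
by apply: (@vconverges0 _ N) => k; have [] := inv k.
Qed.

Lemma hensel_resultant f x (N : int) :
    vcomplete v -> f \is a polyOver (inA v) -> (1 < size f)%N ->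
    resultant f f^`() != 0 -> inA v x ->
    2 * v (resultant f f^`()) < N -> vge v N f.[x] ->
  exists2 a, root f a & vge v (N - v (resultant f f^`())) (a - x).
Proof.
move=> complete fA sf D0 xA DN fx.
have f'A : f^`() \is a polyOver (inA v) by apply: polyOver_deriv.
have D_ge0 := inA_v_ge0 (resultant_inA fA f'A sf) D0.
have D1N : v (resultant f f^`()) + 1 <= N by clear -D_ge0 DN; lia.
have [d0 e_le] := vderiv_le_vresultant fA sf D0 xA (vge_le D1N fx).
have eN : 2 * v f^`().[x] < N by apply: le_lt_trans DN; apply: ler_wpM2l.
have [a fa ax] := hensel complete fA xA d0 eN fx.
by exists a => //; apply: vge_le (lerB (lexx _) e_le) ax.
Qed.

End Valuation.

Section Counting.
Variables (K : fieldType) (v : K -> int) (pi : K) (q : nat).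
Hypotheses (Hv : normalized_discrete_valuation v pi) (Hq : residue_card v q).

Lemma rescale_incong (b : K) (k m : nat) (X : seq K) :
    all (fun x => congr_mod v k x b) X ->
    pairwise (fun x y => ~~ congr_mod v (m + k) x y) X ->
  let Y := [seq (x - b) / pi ^+ k | x <- X] in
  all (inA v) Y /\ pairwise (fun x y => ~~ congr_mod v m x y) Y.
Proof.
move=> Xb Xinc; split.
  apply/allP => _ /mapP[x xX ->].
  by rewrite /inA (vge_divpiX Hv) add0r; apply: (allP Xb).
rewrite pairwise_map; apply: sub_pairwise Xinc => x y /=.
rewrite /congr_mod.
have -> : (x - b) / pi ^+ k - (y - b) / pi ^+ k = (x - y) / pi ^+ k by ring.
by rewrite (vge_divpiX Hv) PoszD.
Qed.

Lemma size_incong_le (m : nat) (X : seq K) :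
    all (inA v) X -> pairwise (fun x y => ~~ congr_mod v m x y) X ->
  (size X <= q ^ m)%N.
Proof.
have [reps [size_reps _ _ cover]] := Hq.
elim: m X => [|m IH] X XA Xinc.
  case: X XA Xinc => [|x [|y X]] //= /and3P[xA yA _] /andP[/andP[xy _] _].
  by case/negP: xy; exact (vgeB Hv xA yA).
rewrite expnS -{1}size_reps; apply: (size_le_mul_count (R := congr_mod v 1)).
  apply/allP => x /(allP XA) /cover[b bB xb]; apply/hasP; exists b => //.
move=> b _; rewrite -size_filter; set Xb := filter _ X.
have Xb_near : all (fun x => congr_mod v 1 x b) Xb by apply: filter_all.
have Xb_inc : pairwise (fun x y => ~~ congr_mod v (m + 1) x y) Xb.
  by rewrite addn1; apply: pairwise_filter.
have [YA Yinc] := rescale_incong Xb_near Xb_inc.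
by rewrite -(size_map (fun x => (x - b) / pi ^+ 1)); apply: IH.
Qed.

Lemma size_incong_near_le (b : K) (k m : nat) (X : seq K) :
    all (fun x => congr_mod v k x b) X ->
    pairwise (fun x y => ~~ congr_mod v (m + k) x y) X ->
  (size X <= q ^ m)%N.
Proof.
move=> Xb Xinc; have [YA Yinc] := rescale_incong Xb Xinc.
by rewrite -(size_map (fun x => (x - b) / pi ^+ k)); apply: size_incong_le.
Qed.

End Counting.

Theorem corollary3p11 (K : fieldType) (v : K -> int) (pi : K) (q : nat)
  (Hv : normalized_discrete_valuation v pi) (Hcomplete : vcomplete v)
  (Hq : residue_card v q)
  (f : {poly K}) (HfA : polyA v f) (Hmonic : f \is monic)
  (HDelta : resultant f f^`() != 0)
  (r : nat) (Hr : v (resultant f f^`()) = r%:Z)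
  (N : nat) (HN : (2 * r < N)%N)
  (L : seq K)
  (HLA : all (inA v) L)
  (HLroot : forall x, x \in L -> vge v N%:Z f.[x])
  (HLdist : forall i j : nat, (i < size L)%N -> (j < size L)%N ->
              congr_mod v N (nth 0 L i) (nth 0 L j) -> i = j)
  (s : seq K) (Hsuniq : uniq s) (Hsroots : forall x : K, root f x = (x \in s)) :
  (size L <= q ^ r * size s)%N.
Proof.
have fA := polyA_polyOver Hv HfA.
have L_inc : pairwise (fun x y => ~~ congr_mod v N x y) L.
  apply/(pairwiseP 0) => i j iL jL lt_ij; apply/negP => /(HLdist _ _ iL jL) eq_ij.
  by rewrite eq_ij ltnn in lt_ij.
have [r_le_N N_gt0 r2N] : [/\ (r <= N)%N, 0 < N%:Z & 2 * r%:Z < N%:Z].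
  by clear -HN; split; lia.
have near_root : all (fun x => has (congr_mod v (N - r) x) s) L.
  apply/allP => x xL; have xA := allP HLA x xL; have fx := HLroot x xL.
  have sf := size_monic_gt1 Hv Hmonic N_gt0 fx.
  have [|a fa ax] := hensel_resultant Hv Hcomplete fA sf HDelta xA _ fx.
    by rewrite Hr.
  apply/hasP; exists a; first by rewrite -Hsroots.
  by rewrite (congr_modC Hv) /congr_mod -subzn // -Hr.
rewrite mulnC; apply: size_le_mul_count near_root _ => a _; rewrite -size_filter.
apply: (@size_incong_near_le _ _ _ _ Hv Hq a (N - r) r); first exact: filter_all.
by rewrite subnKC //; apply: pairwise_filter.
Qed.
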